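(* Let $k\ge 2$, $r,r'\ge1$ be integers, let $P:[r]^k\to\{0,1\}$ and $P':[r']^k\to\{0,1\}$ be $k$-ary predicates, and let $V$ be a finite set with $n=|V|$. Suppose there is a function $f_P:\mathrm{Part}_r(V)\to\mathrm{Part}_{r'}(V^\gamma)$ such that for every weighted directed $k$-uniform hypergraph $H$ on vertex set $V$ and every $\mathcal{A}\in\mathrm{Part}_r(V)$, $$\mathrm{Val}_{H,P}(\mathcal{A})=\mathrm{Val}_{\gamma(H),P'}(f_P(\mathcal{A})),$$ where $\gamma(H)$ is the $k$-partite $k$-fold cover of $H$. Let $H$ be a weighted directed $k$-uniform hypergraph on $V$ and $0<\varepsilon<1$. If there is an $\varepsilon$-$P'$-sparsifier of $\gamma(H)$ with $g(n)$ hyperedges, then there is an $\varepsilon$-$P$-sparsifier of $H$ with $g(n)$ hyperedges.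
   Context: $[r]=\{0,\dots,r-1\}$. A weighted directed $k$-uniform hypergraph $H=(V,E,w)$ has $E$ a set of ordered $k$-tuples of distinct vertices and $w:E\to\mathbb{R}_{>0}$. Its $k$-partite $k$-fold cover is $\gamma(H)=(V^\gamma,E^\gamma,w^\gamma)$ with $V^\gamma=\{v^{(0)},\dots,v^{(k-1)}:v\in V\}$ ($k$ copies of each vertex), $E^\gamma=\{(v_1^{(0)},\dots,v_k^{(k-1)}):(v_1,\dots,v_k)\in E\}$, and $w^\gamma(v_1^{(0)},\dots,v_k^{(k-1)})=w(v_1,\dots,v_k)$; $V^\gamma$ depends only on $V$. $\mathrm{Part}_r(X)$ is the set of ordered $r$-tuples $(A_0,\dots,A_{r-1})$ of pairwise disjoint, possibly empty, subsets of $X$ with union $X$, identified with assignments $A:X\to[r]$ via $A_j=A^{-1}(j)$. For $Q:[s]^k\to\{0,1\}$, a hypergraph $H=(X,E,w)$ and $\mathcal{A}\in\mathrm{Part}_s(X)$ with assignment $A$, $\mathrm{Val}_{H,Q}(\mathcal{A})=\sum_{e\in E}w(e)Q(A(e))$, where $A$ is applied entrywise. An $\varepsilon$-$Q$-sparsifier of $H=(X,E,w)$ is $H_\varepsilon=(X,E_\varepsilon,w_\varepsilon)$ with $E_\varepsilon\subseteq E$, $w_\varepsilon:E_\varepsilon\to\mathbb{R}_{>0}$, such that for every $\mathcal{A}\in\mathrm{Part}_s(X)$, $(1-\varepsilon)\mathrm{Val}_{H,Q}(\mathcal{A})\le\mathrm{Val}_{H_\varepsilon,Q}(\mathcal{A})\le(1+\varepsilon)\mathrm{Val}_{H,Q}(\mathcal{A})$;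 its number of hyperedges is $|E_\varepsilon|$. *)

From mathcomp Require Import all_boot all_order all_algebra.
Set Implicit Arguments. Unset Strict Implicit. Unset Printing Implicit Defensive.
Import Order.TTheory GRing.Theory Num.Theory.
Local Open Scope ring_scope.

(* A weighted directed k-uniform hypergraph on vertex set X is encoded by its
   weight function w : k.-tuple X -> R; the hyperedge set is the support
   {e | w e != 0}, weights on hyperedges are positive, and hyperedges are
   tuples of distinct vertices. *)
Definition is_hypergraph (R : realFieldType) (X : finType) (k : nat)
  (w : k.-tuple X -> R) : Prop :=
  forall e : k.-tuple X, 0 <= w e /\ (w e != 0 -> uniq e).

Definition num_edges (R : realFieldType) (X : finType) (k : nat)
  (w : k.-tuple X -> R) : nat := #|[set e : k.-tuple X | w e != 0]|.

(* Partitions in Part_s(X) are identified with assignments A : X -> [s]. *)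
Definition Val (R : realFieldType) (X : finType) (k s : nat)
  (Q : k.-tuple 'I_s -> bool) (w : k.-tuple X -> R) (A : {ffun X -> 'I_s}) : R :=
  \sum_(e : k.-tuple X) w e * (Q (map_tuple A e))%:R.

(* k-partite k-fold cover: vertex set V * 'I_k, (v,i) = v^(i);
   the tuple (v_1^(0),...,v_k^(k-1)) gets weight w (v_1,...,v_k), others 0. *)
Definition kcover (R : realFieldType) (V : finType) (k : nat)
  (w : k.-tuple V -> R) : k.-tuple (V * 'I_k) -> R :=
  fun t => if [forall i : 'I_k, (tnth t i).2 == i]
           then w (map_tuple fst t) else 0.

Definition is_sparsifier (R : realFieldType) (X : finType) (k s : nat)
  (Q : k.-tuple 'I_s -> bool) (eps : R) (w w' : k.-tuple X -> R) : Prop :=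
  (forall e, 0 <= w' e) /\ (forall e, w' e != 0 -> w e != 0) /\
  forall A : {ffun X -> 'I_s},
    (1 - eps) * Val Q w A <= Val Q w' A /\ Val Q w' A <= (1 + eps) * Val Q w A.

From mathcomp Require Import all_boot all_order all_algebra.
Set Implicit Arguments. Unset Strict Implicit. Unset Printing Implicit Defensive.
Import Order.TTheory GRing.Theory Num.Theory.
Local Open Scope ring_scope.

(* The cover of H only has hyperedges (v_1^(0), ..., v_k^(k-1)), so any
   sparsifier of it lives on such layered tuples.  Layered tuples are in
   bijection with k-tuples of V, and pulling the sparsifier back along this
   bijection gives a weighting of V whose cover is the sparsifier itself.  The
   value identity Val_{H,P} = Val_{cover H,P'} o f_P then transfers the
   sparsifier inequalities from the cover to H, and the bijection preserves the
   number of hyperedges. *)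

Section CoverTuples.

Variables (V : finType) (k : nat).

Definition layered (t : k.-tuple (V * 'I_k)) : bool :=
  [forall i : 'I_k, (tnth t i).2 == i].

Definition cover_tuple (e : k.-tuple V) : k.-tuple (V * 'I_k) :=
  [tuple (tnth e i, i) | i < k].

Lemma cover_tupleK : cancel cover_tuple (map_tuple fst).
Proof. by move=> e; apply: eq_from_tnth => i; rewrite tnth_map tnth_mktuple. Qed.

Lemma cover_tuple_inj : injective cover_tuple.
Proof. exact: can_inj cover_tupleK. Qed.

Lemma layered_cover_tuple (e : k.-tuple V) : layered (cover_tuple e).
Proof. by apply/forallP => i; rewrite tnth_mktuple. Qed.

Lemma map_fst_layeredK (t : k.-tuple (V * 'I_k)) :
  layered t -> cover_tuple (map_tuple fst t) = t.
Proof.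
move/forallP=> t_layered; apply: eq_from_tnth => i.
rewrite tnth_mktuple tnth_map.
by case: (tnth t i) (t_layered i) => v j /= /eqP ->.
Qed.

Variable R : realFieldType.

Lemma kcover_cover_tuple (w : k.-tuple V -> R) (e : k.-tuple V) :
  kcover w (cover_tuple e) = w e.
Proof. by rewrite /kcover ifT ?cover_tupleK //; apply: layered_cover_tuple. Qed.

Lemma kcover_support (w : k.-tuple V -> R) (t : k.-tuple (V * 'I_k)) :
  kcover w t != 0 -> layered t.
Proof. by rewrite /kcover; case: ifP => //; rewrite eqxx. Qed.

Section Pullback.

Variable w' : k.-tuple (V * 'I_k) -> R.
Hypothesis w'_layered : forall t, w' t != 0 -> layered t.

Definition cover_pullback (e : k.-tuple V) : R := w' (cover_tuple e).

Lemma kcover_pullback : kcover cover_pullback =1 w'.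
Proof.
move=> t; rewrite /kcover; case: ifP => [t_layered | t_not_layered].
  by rewrite /cover_pullback map_fst_layeredK.
apply/esym/eqP/(contraFT _ t_not_layered); exact: w'_layered.
Qed.

Lemma num_edges_pullback : num_edges cover_pullback = num_edges w'.
Proof.
rewrite /num_edges -(card_imset _ cover_tuple_inj); apply: eq_card => t.
rewrite inE; apply/imsetP/idP => [[e] | t_edge].
  by rewrite inE => e_edge ->.
have t_layered := w'_layered t_edge.
exists (map_tuple fst t); last by rewrite map_fst_layeredK.
by rewrite inE /cover_pullback map_fst_layeredK.
Qed.

End Pullback.

End CoverTuples.

Lemma eq_Val (R : realFieldType) (X : finType) (k s : nat)
    (Q : k.-tuple 'I_s -> bool) (w w' : k.-tuple X -> R) :
  w =1 w' -> Val Q w =1 Val Q w'.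
Proof. by move=> eq_w A; apply: eq_bigr => e _; rewrite eq_w. Qed.

Lemma is_hypergraph_sub (R : realFieldType) (X : finType) (k : nat)
    (w w' : k.-tuple X -> R) :
  is_hypergraph w -> (forall e, 0 <= w' e) -> (forall e, w' e != 0 -> w e != 0) ->
  is_hypergraph w'.
Proof.
move=> w_hyp w'_ge0 w'_sub e; split; first exact: w'_ge0.
by move=> /w'_sub /(proj2 (w_hyp e)).
Qed.

Theorem proposition13 (R : realFieldType) (k r r' : nat) (V : finType)
  (P : k.-tuple 'I_r -> bool) (P' : k.-tuple 'I_r' -> bool)
  (fP : {ffun V -> 'I_r} -> {ffun V * 'I_k -> 'I_r'}) (g : nat -> nat)
  (w : k.-tuple V -> R) (eps : R) :
  (2 <= k)%N -> (1 <= r)%N -> (1 <= r')%N ->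
  (forall (h : k.-tuple V -> R), is_hypergraph h ->
     forall A : {ffun V -> 'I_r}, Val P h A = Val P' (kcover h) (fP A)) ->
  is_hypergraph w -> 0 < eps < 1 ->
  (exists w' : k.-tuple (V * 'I_k) -> R,
     is_sparsifier P' eps (kcover w) w' /\ num_edges w' = g #|V|) ->
  exists w' : k.-tuple V -> R,
     is_sparsifier P eps w w' /\ num_edges w' = g #|V|.
Proof.
move=> _ _ _ Val_fP w_hyp _ [w' [w'_sparse w'_size]].
have [w'_ge0 [w'_sub w'_bounds]] := w'_sparse.
have w'_layered t : w' t != 0 -> layered t.
  by move/w'_sub; apply: kcover_support.
pose wP := cover_pullback w'.
have wP_sub e : wP e != 0 -> w e != 0.
  by move/w'_sub; rewrite kcover_cover_tuple.
have wP_ge0 e : 0 <= wP e by apply: w'_ge0.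
have wP_hyp : is_hypergraph wP by apply: is_hypergraph_sub wP_ge0 wP_sub.
have Val_wP A : Val P wP A = Val P' w' (fP A).
  by rewrite Val_fP // (eq_Val _ (kcover_pullback w'_layered)).
exists wP; split; last by rewrite num_edges_pullback.
split; first exact: wP_ge0.
split; first exact: wP_sub.
by move=> A; rewrite Val_wP (Val_fP w w_hyp); apply: w'_bounds.
Qed.
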